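(* Let $n\geq 3$. For $k\in\mathbb{N}$ let $\mathbb{D}_k:=\{2^{-j}:0\leq j\leq k\}$ and $$\mathscr{R}_k:=\Big\{[0,s_1]\times\cdots\times[0,s_{n-2}]\times\Big[0,\frac{2^{-(n-1)k}}{s_1\cdots s_{n-2}}\Big]: s_1,\dots,s_{n-2}\in\mathbb{D}_k\Big\}$$ (rectangles in $\mathbb{R}^{n-1}$), let $\mathscr{R}:=\bigcup_{k\in\mathbb{N}}\mathscr{R}_k$ and $\tilde{\mathscr{R}}:=\{R\times[0,1]:R\in\mathscr{R}\}$ (rectangles in $\mathbb{R}^n$). Then the projections of the rectangles of $\tilde{\mathscr{R}}$ onto the $x_{n-1}x_n$ coordinate plane form a family of finite width, and for every Orlicz function $\Phi$ with $\Phi=o(\Phi_{n-2})$ at $\infty$, $M_{\tilde{\mathscr{R}}}$ does not satisfy a weak $L^\Phi$ inequality.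
   Context: A family of rectangles has finite width if it is a finite union of subfamilies each totally ordered by inclusion. For measurable $f$, $M_{\tilde{\mathscr{R}}}f(x):=\sup\{\frac{1}{|R|}\int_{\tau(R)}|f|: R\in\tilde{\mathscr{R}},\ \tau\text{ a translation},\ x\in\tau(R)\}$, $|\cdot|$ being Lebesgue measure. An Orlicz function is a convex increasing $\Phi:[0,\infty)\to[0,\infty)$ with $\Phi(0)=0$; $M_{\tilde{\mathscr{R}}}$ satisfies a weak $L^\Phi$ inequality if there is $C>0$ with $|\{M_{\tilde{\mathscr{R}}}f>\lambda\}|\leq\int_{\mathbb{R}^n}\Phi(C|f|/\lambda)$ for all $\lambda>0$ and all measurable $f$ with $\Phi(|f|)\in L^1$. $\Phi_d(t):=t(1+\log_+^dt)$, $\log_+t=\max(\log t,0)$. *)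

From HB Require Import structures.
From mathcomp Require Import all_boot all_order all_algebra.
From mathcomp Require Import all_classical all_reals all_analysis.
Set Implicit Arguments. Unset Strict Implicit. Unset Printing Implicit Defensive.
Import Order.TTheory GRing.Theory Num.Theory.
Import numFieldNormedType.Exports.
Local Open Scope classical_set_scope.
Local Open Scope ring_scope.

(* R^n is modelled as n.-tuple R, with the product sigma-algebra generated by
   the coordinate maps (provided by MathComp-Analysis). *)

Definition box (R : realType) (n : nat) (a b : n.-tuple R) : set (n.-tuple R) :=
  [set x | forall i : 'I_n, tnth a i <= tnth x i <= tnth b i].

(* mu is n-dimensional Lebesgue measure: it gives every closed box its volume.
   (On the product sigma-algebra this characterizes Lebesgue measure.) *)
Definition is_lebesgue_measure (R : realType) (n : nat)
    (mu : {measure set (n.-tuple R) -> \bar R}) : Prop :=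
  forall a b : n.-tuple R, (forall i : 'I_n, tnth a i <= tnth b i) ->
    mu (box a b) = (\prod_(i < n) (tnth b i - tnth a i))%:E.

Definition translate (R : realType) (n : nat) (a : n.-tuple R)
    (A : set (n.-tuple R)) : set (n.-tuple R) :=
  [set x | exists2 y, A y & x = [tuple tnth y i + tnth a i | i < n]].

Definition maximal_op (R : realType) (n : nat)
    (mu : {measure set (n.-tuple R) -> \bar R}) (F : set (set (n.-tuple R)))
    (f : n.-tuple R -> R) (x : n.-tuple R) : \bar R :=
  ereal_sup [set v | exists A, exists a : n.-tuple R,
     [/\ F A, translate a A x &
         v = ((\int[mu]_(y in translate a A) (`|f y|)%:E)
               * ((fine (mu A))^-1)%:E)%E]].

(* Orlicz function: convex, increasing (nondecreasing), Phi(0) = 0,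
   [0,oo) -> [0,oo); values of Phi on negative reals are irrelevant. *)
Definition orlicz (R : realType) (Phi : R -> R) : Prop :=
  [/\ Phi 0 = 0,
      (forall t, 0 <= t -> 0 <= Phi t),
      (forall s t, 0 <= s -> s <= t -> Phi s <= Phi t) &
      (forall s t l, 0 <= s -> 0 <= t -> 0 <= l <= 1 ->
         Phi (l * s + (1 - l) * t) <= l * Phi s + (1 - l) * Phi t)].

Definition logp (R : realType) (t : R) : R := Num.max (ln t) 0.

Definition Phi_d (R : realType) (d : nat) (t : R) : R := t * (1 + logp t ^+ d).

Definition littleo_at_infty (R : realType) (Phi Psi : R -> R) : Prop :=
  forall eps : R, 0 < eps -> exists M : R, forall t, M <= t ->
    `|Phi t| <= eps * `|Psi t|.

Definition weak_LPhi (R : realType) (n : nat)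
    (mu : {measure set (n.-tuple R) -> \bar R}) (F : set (set (n.-tuple R)))
    (Phi : R -> R) : Prop :=
  exists2 C : R, 0 < C & forall (lam : R) (f : n.-tuple R -> R), 0 < lam ->
    measurable_fun setT f ->
    mu.-integrable setT (fun x => (Phi `|f x|)%:E) ->
    (mu [set x | (lam%:E < maximal_op mu F f x)%E]
       <= \int[mu]_x (Phi (C * `|f x| / lam))%:E)%E.

Definition finite_width (T : Type) (F : set (set T)) : Prop :=
  exists (m : nat) (G : nat -> set (set T)),
    F = \bigcup_(i in `I_m) G i /\
    (forall i, (i < m)%N -> forall A B, G i A -> G i B -> A `<=` B \/ B `<=` A).

(* (0-based coordinate indices i, j < n) *)
Definition proj_plane (R : realType) (n : nat) (i j : nat) (A : set (n.-tuple R))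
    : set (R * R) :=
  [set (nth 0 x i, nth 0 x j) | x in A].

(* side lengths of the rectangle in tilde-R_k with s_i = 2^-(js i), i < n-2:
   coordinates 0..n-3 : s_i ; coordinate n-2 : 2^{-(n-1)k}/(s_1...s_{n-2}) ;
   coordinate n-1 : 1 *)
Definition side (R : realType) (n k : nat) (js : nat -> nat) (i : nat) : R :=
  if (i < n - 2)%N then (2^-1) ^+ js i
  else if i == (n - 2)%N then
    (2^-1) ^+ ((n - 1) * k) / \prod_(l < n - 2) (2^-1) ^+ js l
  else 1.

Definition rect (R : realType) (n k : nat) (js : nat -> nat) : set (n.-tuple R) :=
  [set x | forall i : 'I_n, 0 <= tnth x i <= @side R n k js i].

Definition Rtilde (R : realType) (n : nat) : set (set (n.-tuple R)) :=
  [set A | exists (k : nat) (js : nat -> nat),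
     (forall i, (i < n - 2)%N -> (js i <= k)%N) /\ A = @rect R n k js].

From HB Require Import structures.
From mathcomp Require Import all_boot all_order all_algebra.
From mathcomp Require Import all_classical all_reals all_analysis.
From mathcomp Require Import lra zify ring.
From mathcomp Require Import measurable_realfun.
Set Implicit Arguments. Unset Strict Implicit.
Import Order.TTheory GRing.Theory Num.Theory.
Local Open Scope classical_set_scope.
Local Open Scope ring_scope.

(* The counterexample is a single spike f = h 1_Q, with Q = [0, δ]^n and h δ^(n-1) = 2,
   where δ = 2^-((n-1)K) is the common volume of the rectangles of R_K.  Each of them
   contains Q (all its sides are at least δ), so f averages to 2 over it, and
   {M f > 1} contains the middle parts of all (K+1)^(n-2) rectangles of R_K, which are
   pairwise disjoint of volume δ / 4^n.  The weak inequality thus forces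
   (K+1)^(n-2) h <= 2 4^n Φ(C h); since log h is of order K, the left-hand side dominates
   Φ_(n-2)(C h) up to a constant, and K -> oo contradicts Φ = o(Φ_(n-2)).
   For {M f > λ} to be measurable we use that the average over a translate of a
   rectangle is a product of one-dimensional overlaps, each maximized by an explicit
   shift: this writes the level set as a countable union of superlevel sets of
   measurable functions.  Finite width is immediate, the projections being the nested
   rectangles [0, s] × [0, 1]. *)

Ltac no_minmax t := lazymatch t with
  | context [Order.min _ _] => fail | context [Order.max _ _] => fail | _ => idtac end.

(* Splits innermost min/max first, so that [lra] only ever sees linear atoms. *)
Ltac split_minmax := repeat match goal with
  | |- context [Order.min ?a ?b] => no_minmax a; no_minmax b; case: (leP a b) => ?
  | |- context [Order.max ?a ?b] => no_minmax a; no_minmax b; case: (leP a b) => ?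
  end.

Section Overlap.
Variable R : realFieldType.

(* [overlap s q a] is the length of [a, a + s] ∩ [0, q]; among the shifts [a] with
   [x ∈ [a, a + s]] it is maximal at [best_shift s q x], the one closest to the
   centered shift [(q - s) / 2]. *)
Definition overlap (s q a : R) := Num.max 0 (Num.min q (a + s) - Num.max 0 a).
Definition best_shift (s q x : R) := Num.min x (Num.max (x - s) ((q - s) / 2)).

Lemma overlap_ge0 s q a : 0 <= overlap s q a.
Proof. by rewrite /overlap le_max lexx. Qed.

Lemma overlapE s q a :
  overlap s q a = Num.max 0 (Num.min (Num.min q s) (Num.min (q - a) (a + s))).
Proof. by rewrite /overlap; split_minmax; lra. Qed.

Lemma best_shift_window s q x : 0 <= s -> x - s <= best_shift s q x <= x.
Proof. by move=> *; rewrite /best_shift; split_minmax; lra. Qed.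

Lemma overlap_le_best_shift s q x a : 0 <= s -> x - s <= a <= x ->
  overlap s q a <= overlap s q (best_shift s q x).
Proof.
move=> s_ge0 /andP[xa ax]; rewrite !overlapE.
have : Num.min (q - a) (a + s) <=
       Num.min (q - best_shift s q x) (best_shift s q x + s).
  by rewrite /best_shift; split_minmax; lra.
by move: (Num.min (q - a) _) (Num.min (q - _) _) => u v uv; split_minmax; lra.
Qed.

End Overlap.

Lemma measurable_overlap_best_shift (R : realType) (s q : R) :
  measurable_fun setT (fun x : R => overlap s q (best_shift s q x)).
Proof.
have mshift : measurable_fun setT (best_shift s q).
  apply: measurable_minr; first exact: measurable_id.
  apply: measurable_maxr; last exact: measurable_cst.
  by apply: measurable_funB; [exact: measurable_id | exact: measurable_cst].
apply: (@measurable_maxr _ _ _ _ (cst 0)); first exact: measurable_cst.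
apply: measurable_funB.
  apply: (@measurable_minr _ _ _ _ (cst q)); first exact: measurable_cst.
  by apply: measurable_funD; last exact: measurable_cst.
by apply: (@measurable_maxr _ _ _ _ (cst 0)); first exact: measurable_cst.
Qed.

Lemma chain_finite_width (T : Type) (F : set (set T)) :
  (forall A B, F A -> F B -> A `<=` B \/ B `<=` A) -> finite_width F.
Proof.
move=> chainF; exists 1%N, (fun=> F); split => [|i _]; last exact: chainF.
by apply/seteqP; split => [A FA|A [i _ //]]; exists 0%N.
Qed.

Section Rectangles.
Variable R : realType.

Lemma side_gt0 n k js i : 0 < @side R n k js i.
Proof.
have u_gt0 : 0 < (2 : R)^-1 by rewrite invr_gt0.
rewrite /side; case: ifP => _; first by rewrite exprn_gt0.
case: ifP => _ //; rewrite divr_gt0 ?exprn_gt0 //.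
by apply: prodr_gt0 => l _; rewrite exprn_gt0.
Qed.

Lemma eq_side n k js js' : (forall l, (l < n - 2)%N -> js l = js' l) ->
  @side R n k js = @side R n k js'.
Proof.
move=> e; apply: funext => i; rewrite /side; case: ifP => hi; first by rewrite e.
by case: ifP => // _; congr (_ / _); apply: eq_bigr => l _; rewrite e.
Qed.

(* Only coordinate [n - 2] of [rect] survives the projection: every coordinate
   before it can be moved to [0], and coordinate [n - 1] always ranges over [[0, 1]]. *)
Lemma proj_plane_rect_sub n k js k' js' : (0 < n)%N ->
  @side R n k js (n - 2) <= @side R n k' js' (n - 2) ->
  proj_plane (n - 2) (n - 1) (@rect R n k js) `<=`
  proj_plane (n - 2) (n - 1) (@rect R n k' js').
Proof.
move=> n_gt0 side_le [u v] [x rect_x [<- <-]].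
have n2_lt : (n - 2 < n)%N by lia.
have n1_lt : (n - 1 < n)%N by lia.
exists [tuple if (i < n - 2)%N then 0 else tnth x i | i < n].
  move=> i; rewrite tnth_mktuple.
  case: ifP => i_lt; first by rewrite lexx ltW ?side_gt0.
  have := rect_x i; rewrite /side i_lt; case: ifP => i_eq //.
  move=> /andP[-> le_side] /=.
  by apply: le_trans le_side _; move: side_le; rewrite /side ltnn eqxx.
congr pair.
  by rewrite -(tnth_nth 0 _ (Ordinal n2_lt)) tnth_mktuple /= ltnn (tnth_nth 0).
rewrite -(tnth_nth 0 _ (Ordinal n1_lt)) tnth_mktuple /=.
have -> : (n - 1 < n - 2)%N = false by apply/negbTE; lia.
by rewrite (tnth_nth 0).
Qed.

Lemma finite_width_proj_Rtilde n : (0 < n)%N ->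
  finite_width [set @proj_plane R n (n - 2) (n - 1) A | A in @Rtilde R n].
Proof.
move=> n_gt0; apply: chain_finite_width.
move=> _ _ [_ [k [js [_ ->]]] <-] [_ [k' [js' [_ ->]]] <-].
case: (leP (@side R n k js (n - 2)) (@side R n k' js' (n - 2))) => side_le.
  by left; apply: proj_plane_rect_sub.
by right; apply/proj_plane_rect_sub/ltW.
Qed.

End Rectangles.

Lemma fun_mul_indic (T : Type) (R : pzRingType) (F : R -> R) (c : R) (A : set T) x :
  F 0 = 0 -> F (c * \1_A x) = F c * \1_A x.
Proof. by move=> F0; rewrite indicE; case: (x \in A) => /=; rewrite ?mulr1 ?mulr0. Qed.

Section Boxes.
Variables (R : realType) (n : nat).
Implicit Types (a b c e lo hi : n.-tuple R).

Lemma measurable_box a b : measurable (box a b).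
Proof.
have -> : box a b = \bigcap_(i in [set: 'I_n])
    ((fun x : n.-tuple R => tnth x i) @^-1` `[tnth a i, tnth b i]).
  apply/seteqP; split => x /=; first by move=> ab_x i _ /=; rewrite in_itv /=.
  by move=> ab_x i; have := ab_x i Logic.I; rewrite /= in_itv.
apply: fin_bigcap_measurable => [|i _]; first exact: finite_finset.
by rewrite -[X in measurable X]setTI; apply: measurable_tnth.
Qed.

Lemma translate_box a lo hi : translate a (box lo hi) =
  box [tuple tnth lo i + tnth a i | i < n] [tuple tnth hi i + tnth a i | i < n].
Proof.
apply/seteqP; split => x /=.
  by move=> [y box_y ->] i; rewrite !tnth_mktuple !lerD2r; exact: box_y.
move=> box_x; exists [tuple tnth x i - tnth a i | i < n].
  move=> i; have := box_x i; rewrite !tnth_mktuple => /andP[lo_x x_hi].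
  by rewrite lerBrDr lo_x lerBlDr x_hi.
by apply: eq_from_tnth => i; rewrite !tnth_mktuple subrK.
Qed.

Lemma setI_box a b c e : box a b `&` box c e =
  box [tuple Num.max (tnth a i) (tnth c i) | i < n]
      [tuple Num.min (tnth b i) (tnth e i) | i < n].
Proof.
apply/seteqP; split => x /=.
  move=> [ab_x ce_x] i; rewrite !tnth_mktuple ge_max le_min.
  by case/andP: (ab_x i) => -> ->; case/andP: (ce_x i) => -> ->.
move=> box_x; split => i; have := box_x i; rewrite !tnth_mktuple ge_max le_min.
  by case/andP => /andP[-> _] /andP[-> _].
by case/andP => /andP[_ ->] /andP[_ ->].
Qed.

Lemma rect_box k js :
  @rect R n k js = box [tuple 0 | _ < n] [tuple @side R n k js i | i < n].
Proof. by apply/seteqP; split => x rect_x i; have := rect_x i; rewrite !tnth_mktuple. Qed.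

Definition rect_vol k js := \prod_(i < n) @side R n k js i.

Lemma rect_vol_gt0 k js : 0 < rect_vol k js.
Proof. by apply: prodr_gt0 => i _; apply: side_gt0. Qed.

Definition cube (dl : R) := box [tuple 0 | _ < n] [tuple dl | _ < n].

Definition spike (dl h : R) (x : n.-tuple R) := h * \1_(cube dl) x.

Lemma measurable_spike dl h : measurable_fun setT (spike dl h).
Proof.
apply: (@measurable_funM _ _ _ _ (cst h)); first exact: measurable_cst.
exact: measurable_indic (measurable_box _ _).
Qed.

Lemma normr_spike dl h x : 0 <= h -> `|spike dl h x| = h * \1_(cube dl) x.
Proof. by move=> h_ge0; rewrite normrM !ger0_norm // indicE ler0n. Qed.

Variable mu : {measure set (n.-tuple R) -> \bar R}.
Hypothesis hmu : is_lebesgue_measure mu.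

Lemma measure_box a b :
  mu (box a b) = (\prod_(i < n) Num.max 0 (tnth b i - tnth a i))%:E.
Proof.
case: (pselect (forall i : 'I_n, tnth a i <= tnth b i)) => [ab|].
  rewrite hmu //; congr EFin; apply: eq_bigr => i _.
  by rewrite max_r // subr_ge0.
move=> /existsNP[i /negP]; rewrite -ltNge => ba_i.
have -> : box a b = set0.
  apply/seteqP; split => x //= box_x; have /andP[a_x x_b] := box_x i.
  by move: ba_i; rewrite ltNge (le_trans a_x x_b).
by rewrite measure0 (bigD1 i) //= max_l ?mul0r // subr_le0 ltW.
Qed.

Lemma measure_rect k js : mu (@rect R n k js) = (rect_vol k js)%:E.
Proof.
rewrite rect_box measure_box; congr EFin; apply: eq_bigr => i _.
by rewrite !tnth_mktuple subr0 max_r // ltW // side_gt0.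
Qed.

Lemma measure_cube dl : 0 <= dl -> mu (cube dl) = (dl ^+ n)%:E.
Proof.
move=> dl_ge0; rewrite measure_box; congr EFin.
rewrite (eq_bigr (fun=> dl)) ?prodr_const ?card_ord // => i _.
by rewrite !tnth_mktuple subr0 max_r.
Qed.

Lemma integral_indic_cube (c dl : R) : 0 <= c -> 0 <= dl ->
  (\int[mu]_x (c * \1_(cube dl) x)%:E = (c * dl ^+ n)%:E)%E.
Proof.
move=> c_ge0 dl_ge0.
rewrite (@integralZl_indic _ _ _ mu _ measurableT (fun=> cube dl) c) //; last first.
- exact: measurable_box.
- by move=> /lt_le_trans /(_ c_ge0); rewrite ltxx.
rewrite integral_indic ?setIT ?measure_cube //; exact: measurable_box.
Qed.

Lemma integrable_indic_cube (c dl : R) : 0 <= dl ->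
  mu.-integrable setT (fun x => (c * \1_(cube dl) x)%:E).
Proof.
move=> dl_ge0; apply/integrableP; split.
  apply/measurable_EFinP; apply: (@measurable_funM _ _ _ _ (cst c)).
    exact: measurable_cst.
  exact: measurable_indic (measurable_box _ _).
under eq_integral => x _ do
  rewrite abse_EFin normrM (ger0_norm (x := \1_(cube dl) x)) ?indicE ?ler0n // -indicE.
by rewrite integral_indic_cube // ltry.
Qed.

End Boxes.

(* [R_k] is indexed by the exponent tuples [t] with [s_i = 2^-(t_i)]; [exps_of t] is
   the exponent function that [rect] expects. *)
Definition exps_of m k (t : m.-tuple 'I_k.+1) : nat -> nat := nth 0%N (map val t).

Lemma exps_ofE m k (t : m.-tuple 'I_k.+1) l (l_lt : (l < m)%N) :
  exps_of t l = tnth t (Ordinal l_lt).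
Proof. by rewrite /exps_of (nth_map ord0) ?size_tuple // (tnth_nth ord0). Qed.

Lemma exps_of_le m k (t : m.-tuple 'I_k.+1) l : (l < m)%N -> (exps_of t l <= k)%N.
Proof. by move=> l_lt; rewrite (exps_ofE _ l_lt) -ltnS. Qed.

Lemma exps_of_inord m k (js : nat -> nat) l : (forall i, (i < m)%N -> (js i <= k)%N) ->
  (l < m)%N -> exps_of [tuple (inord (js i) : 'I_k.+1) | i < m] l = js l.
Proof. by move=> js_le l_lt; rewrite (exps_ofE _ l_lt) tnth_mktuple inordK ?ltnS ?js_le. Qed.

Lemma maximal_op_ge (R : realType) n (mu : {measure set (n.-tuple R) -> \bar R})
    F (f : n.-tuple R -> R) A a x : F A -> translate a A x ->
  ((\int[mu]_(y in translate a A) (`|f y|)%:E) * ((fine (mu A))^-1)%:E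
     <= maximal_op mu F f x)%E.
Proof. by move=> FA Ax; apply: ereal_sup_ubound; exists A, a. Qed.

Section SpikeMaximal.
Variables (R : realType) (n : nat).
Variable mu : {measure set (n.-tuple R) -> \bar R}.
Hypothesis hmu : is_lebesgue_measure mu.
Variables dl h : R.
Hypothesis h_ge0 : 0 <= h.

Lemma average_spike k js a :
  ((\int[mu]_(y in translate a (@rect R n k js)) (`|spike dl h y|)%:E)
     * ((fine (mu (@rect R n k js)))^-1)%:E)%E
  = (h * (\prod_(i < n) overlap (@side R n k js i) dl (tnth a i))
       / rect_vol R n k js)%:E.
Proof.
have mrect : measurable (translate a (@rect R n k js)).
  by rewrite rect_box translate_box; apply: measurable_box.
under eq_integral => y _ do rewrite normr_spike //.
rewrite (@integralZl_indic _ _ _ mu _ mrect (fun=> @cube R n dl) h) //; last first.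
- exact: measurable_box.
- by move=> /lt_le_trans /(_ h_ge0); rewrite ltxx.
rewrite integral_indic //; last exact: measurable_box.
rewrite measure_rect //= rect_box translate_box setI_box measure_box // -!EFinM.
congr (EFin (_ * _ / _)); apply: eq_bigr => i _.
by rewrite !tnth_mktuple /overlap add0r (addrC (tnth a i)).
Qed.

Definition best_average k js (x : n.-tuple R) :=
  h * (\prod_(i < n) overlap (@side R n k js i) dl
                        (best_shift (@side R n k js i) dl (tnth x i)))
    / rect_vol R n k js.

(* The average over [translate a (rect k js)] factorizes over the coordinates, so
   among the translates containing [x] it is maximized coordinatewise by [best_shift]. *)
Lemma maximal_op_spike_gt lam x :
  (lam%:E < maximal_op mu (@Rtilde R n) (spike dl h) x)%E <->
  exists k js, (forall i, (i < n - 2)%N -> (js i <= k)%N) /\ lam < best_average k js x.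
Proof.
split.
  move/ereal_sup_gtP => [_ [_ [a [[k [js [js_le ->]]] Ax ->]]]].
  rewrite average_spike lte_fin => lam_lt; exists k, js; split => //.
  apply: lt_le_trans lam_lt _.
  rewrite /best_average ler_pM2r ?invr_gt0 ?rect_vol_gt0 // ler_wpM2l //.
  apply: ler_prod => i _; rewrite overlap_ge0 /=.
  move: Ax; rewrite rect_box translate_box => /(_ i); rewrite !tnth_mktuple add0r.
  move=> /andP[a_x x_a]; apply: overlap_le_best_shift; first exact/ltW/side_gt0.
  by rewrite a_x andbT lerBlDr addrC.
move=> [k [js [js_le lam_lt]]].
set a := [tuple best_shift (@side R n k js i) dl (tnth x i) | i < n].
have Ax : translate a (@rect R n k js) x.
  rewrite rect_box translate_box => i; rewrite !tnth_mktuple add0r.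
  have /andP[lo hi] := best_shift_window dl (tnth x i) (ltW (side_gt0 R n k js i)).
  by rewrite hi /= addrC -lerBlDr.
have RA : Rtilde (@rect R n k js) by exists k, js.
apply: lt_le_trans (maximal_op_ge mu (spike dl h) RA Ax).
rewrite average_spike /a lte_fin; apply: lt_le_trans lam_lt _.
rewrite /best_average le_eqVlt -/a; apply/orP; left; apply/eqP.
by congr (_ * _ / _); apply: eq_bigr => i _; rewrite tnth_mktuple.
Qed.

Lemma measurable_best_average k js : measurable_fun setT (best_average k js).
Proof.
apply: (@measurable_funM _ _ _ _ _ (cst (rect_vol R n k js)^-1)); last first.
  exact: measurable_cst.
apply: (@measurable_funM _ _ _ _ (cst h)); first exact: measurable_cst.
apply: measurable_prod => i _.
by apply: measurableT_comp (measurable_overlap_best_shift _ _) (measurable_tnth _).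
Qed.

Lemma measurable_spike_level_set lam :
  measurable [set x | (lam%:E < maximal_op mu (@Rtilde R n) (spike dl h) x)%E].
Proof.
have -> : [set x | (lam%:E < maximal_op mu (@Rtilde R n) (spike dl h) x)%E] =
    \bigcup_(k in [set: nat]) \bigcup_(t in [set: (n - 2).-tuple 'I_k.+1])
      (best_average k (exps_of t) @^-1` `]lam, +oo[).
  apply/seteqP; split => x.
    move/maximal_op_spike_gt => [k [js [js_le lam_lt]]]; exists k => //.
    exists [tuple (inord (js i) : 'I_k.+1) | i < n - 2] => //.
    rewrite /= /best_average /rect_vol.
    have -> : @side R n k (exps_of [tuple (inord (js i) : 'I_k.+1) | i < n - 2])
              = @side R n k js by apply: eq_side => l; apply: exps_of_inord.
    by rewrite in_itv /= andbT.
  move=> [k _ [t _]]; rewrite /= in_itv /= andbT => lam_lt.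
  by apply/maximal_op_spike_gt; exists k, (exps_of t); split => // i; apply: exps_of_le.
apply: bigcup_measurable => k _; apply: fin_bigcup_measurable => [|t _].
  exact: finite_finset.
by rewrite -[X in measurable X]setTI; apply: measurable_best_average.
Qed.

End SpikeMaximal.

Section RtildeGeometry.
Variables (R : realType) (d : nat).

(* [cube_side K] is the common volume of the rectangles of [R_K], and the height
   [spike_height K] makes the average of the spike over each of them equal to [2]. *)
Definition cube_side (K : nat) : R := 2^-1 ^+ (d.+1 * K).
Definition spike_height (K : nat) : R := 2 ^+ (d.+1 * K * d.+1).+1.

Lemma cube_side_gt0 K : 0 < cube_side K.
Proof. by rewrite exprn_gt0 // invr_gt0. Qed.

Lemma spike_height_gt0 K : 0 < spike_height K.
Proof. by rewrite exprn_gt0. Qed.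

Lemma spike_height_cube_side K : spike_height K * cube_side K ^+ d.+1 = 2.
Proof.
by rewrite /spike_height /cube_side -exprM exprS -mulrA -exprMn divff ?expr1n ?mulr1.
Qed.

Lemma nat_lt_spike_height K : (K%:R : R) < spike_height K.
Proof.
rewrite /spike_height -natrX ltr_nat; apply: leq_ltn_trans (ltn_expl _ (ltnSn 1)); nia.
Qed.

Lemma side_dyadic K js i : (i < d)%N -> @side R d.+2 K js i = 2^-1 ^+ js i.
Proof. by move=> i_lt; rewrite /side !subSS subn0 i_lt. Qed.

Lemma side_balancing K js :
  @side R d.+2 K js d = cube_side K / \prod_(l < d) 2^-1 ^+ js l.
Proof. by rewrite /side !subSS !subn0 ltnn eqxx. Qed.

Lemma side_last K js : @side R d.+2 K js d.+1 = 1.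
Proof.
rewrite /side !subSS subn0 ltnNge leqnSn /=.
by have -> : (d.+1 == d) = false by apply/negbTE; rewrite neq_ltn ltnSn orbT.
Qed.

Lemma rect_vol_Rtilde K js : rect_vol R d.+2 K js = cube_side K.
Proof.
have prod_gt0 : 0 < \prod_(l < d) (2^-1 : R) ^+ js l.
  by apply: prodr_gt0 => l _; rewrite exprn_gt0 // invr_gt0.
rewrite /rect_vol big_ord_recr big_ord_recr /= side_last side_balancing mulr1.
under eq_bigr => l _ do rewrite side_dyadic //.
by rewrite mulrCA divff ?mulr1 // gt_eqF.
Qed.

Lemma cube_side_le_side K js : (forall l, (l < d)%N -> (js l <= K)%N) ->
  forall i : 'I_d.+2, cube_side K <= @side R d.+2 K js i.
Proof.
move=> js_le i.
have u_ge0 : 0 <= (2^-1 : R) by rewrite invr_ge0.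
have u_le1 : (2^-1 : R) <= 1 by rewrite invf_le1 ?ler1n.
case: (ltngtP i d) => i_d.
- rewrite side_dyadic //; apply: ler_wiXn2l => //.
  by apply: leq_trans (js_le _ i_d) _; rewrite leq_pmull.
- have -> : nat_of_ord i = d.+1 by have := ltn_ord i; lia.
  by rewrite side_last exprn_ile1.
- rewrite i_d side_balancing ler_pdivlMr ?ler_piMr ?exprn_ge0 //.
    by apply: prodr_ile1 => l _; rewrite exprn_ge0 //= exprn_ile1.
  by apply: prodr_gt0 => l _; rewrite exprn_gt0 // invr_gt0.
Qed.

(* The middle parts [[s / 2, 3 s / 4]] of the sides of the rectangles of [R_K] are
   pairwise disjoint, as distinct rectangles differ by a factor [2] in some side. *)
Definition core K (e : d.-tuple 'I_K.+1) : set ((d.+2).-tuple R) :=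
  box [tuple @side R d.+2 K (exps_of e) i / 2 | i < d.+2]
      [tuple @side R d.+2 K (exps_of e) i * (3 / 4) | i < d.+2].

Lemma dyadic_middle_disjoint (a b : nat) (y : R) : (a < b)%N ->
  2^-1 ^+ a / 2 <= y -> y <= 2^-1 ^+ b * (3 / 4) -> False.
Proof.
move=> a_lt_b ya yb.
have b_le : (2^-1 : R) ^+ b <= 2^-1 ^+ a / 2.
  by rewrite -exprSr; apply: ler_wiXn2l; rewrite ?invr_ge0 ?invf_le1 ?ler1n.
have : 0 < (2^-1 : R) ^+ a by rewrite exprn_gt0 // invr_gt0.
lra.
Qed.

Lemma core_disjoint K (e e' : d.-tuple 'I_K.+1) : e != e' -> core e `&` core e' = set0.
Proof.
move=> e_neq; apply/seteqP; split => // x [core_x core'_x].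
have : ~ (forall l, tnth e l = tnth e' l).
  by move=> e_eq; move/eqP: e_neq; apply; apply: eq_from_tnth.
move=> /existsNP[l el_neq].
have l_lt : (l < d.+2)%N by have := ltn_ord l; lia.
have := core_x (Ordinal l_lt); have := core'_x (Ordinal l_lt).
rewrite !tnth_mktuple /= !side_dyadic // !(exps_ofE _ (ltn_ord l)).
have -> : Ordinal (ltn_ord l) = l by apply: val_inj.
move=> /andP[lo' hi'] /andP[lo hi].
case: (ltngtP (tnth e l) (tnth e' l)) => [lt|lt|/val_inj //].
- exact: dyadic_middle_disjoint lt lo hi'.
- exact: dyadic_middle_disjoint lt lo' hi.
Qed.

Variable mu : {measure set ((d.+2).-tuple R) -> \bar R}.
Hypothesis hmu : is_lebesgue_measure mu.
Variable K : nat.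

Local Notation spike := (spike (cube_side K) (spike_height K)).
Local Notation level_set := [set x | (1%:E < maximal_op mu (@Rtilde R d.+2) spike x)%E].

Lemma core_sub_level_set (e : d.-tuple 'I_K.+1) : core e `<=` level_set.
Proof.
move=> x core_x; rewrite /=.
have RA : Rtilde (@rect R d.+2 K (exps_of e)).
  by exists K, (exps_of e); split => // l; rewrite !subSS subn0; apply: exps_of_le.
have rect_x : translate [tuple 0 | _ < d.+2] (@rect R d.+2 K (exps_of e)) x.
  rewrite rect_box translate_box => i; rewrite !tnth_mktuple !addr0.
  have := core_x i; rewrite !tnth_mktuple.
  have := side_gt0 R d.+2 K (exps_of e) i; lra.
apply: lt_le_trans (maximal_op_ge mu _ RA rect_x).
rewrite average_spike //; last exact/ltW/spike_height_gt0.
rewrite lte_fin rect_vol_Rtilde.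
under eq_bigr => i _ do rewrite tnth_mktuple /overlap add0r maxxx subr0
  (min_l (cube_side_le_side (exps_of_le e) i)) max_r ?(ltW (cube_side_gt0 K)) //.
rewrite prodr_const card_ord exprS mulrCA (mulrC (cube_side K)) mulrK.
  by rewrite spike_height_cube_side ltr1n.
by rewrite unitfE gt_eqF // cube_side_gt0.
Qed.

Lemma measure_core (e : d.-tuple 'I_K.+1) : mu (core e) = (cube_side K / 4 ^+ d.+2)%:E.
Proof.
rewrite measure_box //; congr EFin.
rewrite (eq_bigr (fun i : 'I_d.+2 => @side R d.+2 K (exps_of e) i * 4^-1)); last first.
  move=> i _; have := side_gt0 R d.+2 K (exps_of e) i.
  by rewrite !tnth_mktuple => side_pos; rewrite max_r; lra.
by rewrite big_split /= prodr_const card_ord -/(rect_vol _ _ _ _) rect_vol_Rtilde exprVn.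
Qed.

Lemma measure_level_set_ge :
  (((K.+1 ^ d)%:R * (cube_side K / 4 ^+ d.+2))%:E <= mu level_set)%E.
Proof.
pose T := d.-tuple 'I_K.+1.
pose cores := \big[setU/set0]_(j < #|{: T}|) core (enum_val j).
have cores_sub : cores `<=` level_set.
  apply: (big_ind (fun S => S `<=` level_set)) => // [A B sA sB x [/sA|/sB] //|j _].
  exact: core_sub_level_set.
have disj : trivIset setT (fun j : 'I_#|{: T}| => core (enum_val j)).
  apply/trivIsetP => i j _ _ ij; apply: core_disjoint.
  by apply: contra ij => /eqP/enum_val_inj ->.
have -> : ((K.+1 ^ d)%:R * (cube_side K / 4 ^+ d.+2))%:E = mu cores.
  rewrite measure_bigsetU_ord // => [|j]; last exact: measurable_box.
  rewrite (eq_bigr (fun=> (cube_side K / 4 ^+ d.+2)%:E)) => [|j _]; last exact: measure_core.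
  by rewrite sumEFin sumr_const card_ord mulr_natl card_tuple card_ord.
apply: le_measure cores_sub; rewrite inE.
  by apply: bigsetU_measurable => j _; apply: measurable_box.
exact: measurable_spike_level_set (ltW (spike_height_gt0 K)) 1.
Qed.

End RtildeGeometry.

Lemma not_littleo_of_le (R : realType) (Phi Psi : R -> R) (t : nat -> R) (c : R) :
  0 < c -> (forall M, exists K, M <= t K) -> (forall K, 0 < Psi (t K)) ->
  (forall K, Psi (t K) <= c * Phi (t K)) -> ~ littleo_at_infty Phi Psi.
Proof.
move=> c_gt0 t_unbounded Psi_gt0 Psi_le Phi_o.
have eps_gt0 : 0 < (2 * c)^-1 by rewrite invr_gt0 mulr_gt0.
have [M Phi_small] := Phi_o _ eps_gt0.
have [K MK] := t_unbounded M.
have := ler_wpM2l (ltW c_gt0) (Phi_small _ MK).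
rewrite (gtr0_norm (Psi_gt0 K)) mulrA (_ : c * (2 * c)^-1 = 2^-1); last first.
  by field; rewrite gt_eqF.
have := ler_wpM2l (ltW c_gt0) (ler_norm (Phi (t K))).
by have := Psi_le K; have := Psi_gt0 K; lra.
Qed.

Lemma Phi_d_gt0 (R : realType) d (t : R) : 0 < t -> 0 < Phi_d d t.
Proof.
move=> t_gt0; rewrite /Phi_d mulr_gt0 // ltr_wpDr // exprn_ge0 //.
by rewrite /logp le_max lexx orbT.
Qed.

Section WeakTypeFailure.
Variables (R : realType) (d : nat).

Lemma spike_height_unbounded (C : R) : 0 < C ->
  forall M, exists K, M <= C * spike_height R d K.
Proof.
move=> C_gt0 M; exists (Num.Def.archi_bound (`|M| / C)).
apply: le_trans (ler_norm M) _; rewrite mulrC -ler_pdivrMr //.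
apply/ltW/(lt_trans _ (nat_lt_spike_height R d _)).
by apply: archi_boundP; rewrite divr_ge0 // ltW.
Qed.

(* [log_+ (C * spike_height K)] grows at most linearly in [K], with this slope. *)
Definition log_rate (C : R) := `|ln C| + 2 * (d.+1 ^ 2)%:R.

Lemma log_rate_ge1 C : 1 <= log_rate C.
Proof.
rewrite /log_rate; have : 1 <= (d.+1 ^ 2)%:R :> R by rewrite ler1n expn_gt0.
by have := normr_ge0 (ln C); lra.
Qed.

Lemma logp_spike_height_le C K : 0 < C ->
  logp (C * spike_height R d K) <= log_rate C * K.+1%:R.
Proof.
move=> C_gt0; have rate_ge1 := log_rate_ge1 C.
have K1_ge1 : 1 <= K.+1%:R :> R by rewrite ler1n.
have bound_ge0 : 0 <= log_rate C * K.+1%:R by rewrite mulr_ge0 ?ler0n //; lra.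
rewrite /logp ge_max bound_ge0 andbT.
rewrite lnM ?posrE ?spike_height_gt0 // /spike_height lnXn // -[ln 2 *+ _]mulr_natr.
have ln2_le2 : ln (2 : R) <= 2 by apply/ltW/ln_sublinear.
have ln2_ge0 : 0 <= ln (2 : R) by apply: ln_ge0; rewrite ler1n.
have exp_le : ((d.+1 * K * d.+1).+1%:R <= (d.+1 ^ 2)%:R * K.+1%:R :> R).
  by rewrite -natrM ler_nat; nia.
have lnC_le : ln C <= `|ln C| * K.+1%:R.
  by apply: le_trans (ler_norm _) _; rewrite ler_peMr.
have ln_h_le : ln 2 * (d.+1 * K * d.+1).+1%:R <= 2 * ((d.+1 ^ 2)%:R * K.+1%:R) :> R.
  apply: le_trans (_ : ln 2 * ((d.+1 ^ 2)%:R * K.+1%:R) <= _); first by rewrite ler_wpM2l.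
  by rewrite ler_wpM2r // mulr_ge0 ?ler0n.
by rewrite /log_rate mulrDl -mulrA; lra.
Qed.

Lemma Phi_d_spike_height_le C K : 0 < C ->
  Phi_d d (C * spike_height R d K)
    <= 2 * C * log_rate C ^+ d * (K.+1 ^ d)%:R * spike_height R d K.
Proof.
move=> C_gt0; have rate_ge1 := log_rate_ge1 C.
have K1_ge1 : 1 <= K.+1%:R :> R by rewrite ler1n.
have Ch_gt0 : 0 < C * spike_height R d K by rewrite mulr_gt0 ?spike_height_gt0.
have logp_le : logp (C * spike_height R d K) ^+ d <= (log_rate C * K.+1%:R) ^+ d.
  rewrite lerXn2r ?nnegrE ?logp_spike_height_le // ?mulr_ge0 //; try lra.
  by rewrite /logp le_max lexx orbT.
have rate_pow_ge1 : 1 <= (log_rate C * K.+1%:R) ^+ d.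
  by apply: exprn_ege1; rewrite -[1]mulr1 ler_pM //; lra.
rewrite /Phi_d natrX.
have -> : 2 * C * log_rate C ^+ d * K.+1%:R ^+ d * spike_height R d K =
          C * spike_height R d K * (2 * (log_rate C * K.+1%:R) ^+ d).
  by rewrite exprMn; ring.
by rewrite ler_pM2l //; lra.
Qed.

Variable mu : {measure set ((d.+2).-tuple R) -> \bar R}.
Hypothesis hmu : is_lebesgue_measure mu.

(* At height [1] the level set of the spike has measure at least
   [(K + 1)^d cube_side K / 4^(d + 2)], whereas the weak inequality bounds it by
   [Phi (C h_K) cube_side K ^ (d + 2)]. *)
Lemma weak_LPhi_Phi_spike_ge Phi : orlicz Phi -> weak_LPhi mu (@Rtilde R d.+2) Phi ->
  exists2 C : R, 0 < C & forall K,
    (K.+1 ^ d)%:R * spike_height R d K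
      <= 2 * 4 ^+ d.+2 * Phi (C * spike_height R d K).
Proof.
move=> [Phi0 Phi_ge0 _ _] [C C_gt0 weak]; exists C => // K.
set h := spike_height R d K; set dl := cube_side R d K.
have h_gt0 : 0 < h by apply: spike_height_gt0.
have dl_gt0 : 0 < dl by apply: cube_side_gt0.
have Q_gt0 : 0 < (4 : R) ^+ d.+2 by rewrite exprn_gt0.
have integrable : mu.-integrable setT (fun x => (Phi `|spike dl h x|)%:E).
  under eq_fun => x do rewrite normr_spike ?fun_mul_indic ?ltW //.
  exact: integrable_indic_cube (ltW dl_gt0).
have := weak 1 (spike dl h) ltr01 (measurable_spike _ _) integrable.
under eq_integral => x _ do
  rewrite divr1 normr_spike ?ltW // mulrA fun_mul_indic ?mulr0 //.
rewrite integral_indic_cube ?Phi_ge0 ?mulr_ge0 ?(ltW C_gt0) ?(ltW h_gt0) ?(ltW dl_gt0) //.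
move=> /(le_trans (measure_level_set_ge hmu K)); rewrite lee_fin.
have -> : dl ^+ d.+2 = 2 * dl / h.
  have := spike_height_cube_side R d K; rewrite -/dl -/h => <-.
  by rewrite exprS; field; rewrite gt_eqF.
set M := (K.+1 ^ d)%:R; set Q := 4 ^+ d.+2; set P := Phi (C * h) => bound.
have -> : M * h = M * (dl / Q) * (h * Q / dl) by field; rewrite !gt_eqF.
have -> : 2 * Q * P = P * (2 * dl / h) * (h * Q / dl) by field; rewrite !gt_eqF.
by rewrite ler_pM2r // divr_gt0 // mulr_gt0.
Qed.

Lemma weak_LPhi_Phi_d_le Phi : orlicz Phi -> weak_LPhi mu (@Rtilde R d.+2) Phi ->
  exists2 C : R, 0 < C & forall K,
    Phi_d d (C * spike_height R d K)
      <= 4 ^+ d.+3 * C * log_rate C ^+ d * Phi (C * spike_height R d K).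
Proof.
move=> Phi_orlicz /(weak_LPhi_Phi_spike_ge Phi_orlicz) [C C_gt0 Phi_ge].
exists C => // K; apply: le_trans (Phi_d_spike_height_le K C_gt0) _.
have -> : 4 ^+ d.+3 * C * log_rate C ^+ d * Phi (C * spike_height R d K) =
    2 * C * log_rate C ^+ d * (2 * 4 ^+ d.+2 * Phi (C * spike_height R d K)) by rewrite exprS; ring.
rewrite -mulrA ler_wpM2l // mulr_ge0 ?exprn_ge0 ?mulr_ge0 ?(ltW C_gt0) //.
by apply: le_trans (log_rate_ge1 C).
Qed.

End WeakTypeFailure.

Theorem mainTheorem8 (R : realType) (n : nat) (hn : (3 <= n)%N)
    (mu : {measure set (n.-tuple R) -> \bar R})
    (hmu : is_lebesgue_measure mu) :
  finite_width
    [set @proj_plane R n (n - 2) (n - 1) A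
       | A in @Rtilde R n]
  /\
  (forall Phi : R -> R, orlicz Phi ->
     littleo_at_infty Phi (@Phi_d R (n - 2)) ->
     ~ weak_LPhi mu (@Rtilde R n) Phi).
Proof.
split; first by apply: finite_width_proj_Rtilde; lia.
move=> Phi Phi_orlicz; case: n hn mu hmu => [|[|d]] // _ mu hmu.
rewrite !subSS subn0 => Phi_o /(weak_LPhi_Phi_d_le hmu Phi_orlicz) [C C_gt0 Phi_d_le].
apply: not_littleo_of_le (spike_height_unbounded d C_gt0) _ Phi_d_le Phi_o.
  have rate_gt0 := lt_le_trans ltr01 (log_rate_ge1 d C).
  by rewrite mulr_gt0 ?exprn_gt0 // mulr_gt0 ?exprn_gt0.
by move=> K; apply/Phi_d_gt0/mulr_gt0/spike_height_gt0.
Qed.
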